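(* Let $(\mathbf v,p,\varphi,\mu)$ be a sufficiently smooth solution on $\Omega\times(0,T)$, $\Omega\subset\mathbb R^d$, of $$\partial_t(\rho\mathbf v)+\operatorname{div}(\rho\mathbf v\otimes\mathbf v)-\operatorname{div}(2\eta(\varphi)D\mathbf v)+\nabla p=-\operatorname{div}(a(\varphi,\nabla\varphi)\nabla\varphi\otimes\nabla\varphi),\qquad\operatorname{div}\mathbf v=0,$$ $$\partial_t\widehat{\rho c}(\varphi)+\mathbf v\cdot\nabla\widehat{\rho c}(\varphi)=\operatorname{div}(\tilde m(\varphi)\nabla\mu),\qquad \frac{\partial\widehat{\rho c}}{\partial\varphi}\mu=\frac{\partial f}{\partial\varphi}(\varphi,\nabla\varphi)-\operatorname{div}(a(\varphi,\nabla\varphi)\nabla\varphi)-\frac{\partial\rho}{\partial\varphi}\frac{|\mathbf v|^2}{2},$$ where $\rho=\hat\rho(\varphi)$, $\widehat{\rho c}$, $f$ are smooth, $\eta\ge0$, $\tilde m\ge0$, and $a$ satisfies $\frac{\partial f}{\partial\nabla\varphi}(\varphi,\nabla\varphi)=a(\varphi,\nabla\varphi)\nabla\varphi$. Set $e=\hat\rho(\varphi)\frac{|\mathbf v|^2}2+f(\varphi,\nabla\varphi)$, $\mathbf J=-\tilde m(\varphi)\nabla\mu$, $\boldsymbol\xi=\frac{\partial f}{\partial\nabla\varphi}(\varphi,\nabla\varphi)$, $\dot\varphi=\partial_t\varphi+\mathbf v\cdot\nabla\varphi$ and $\mathbf T=2\eta(\varphi)D\mathbf v-\nabla\varphi\otimes\boldsymbol\xi-p\mathbf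 I$. Then the local dissipation identity $$\partial_te+\mathbf v\cdot\nabla e-\operatorname{div}(\mathbf T\mathbf v)-\operatorname{div}(\dot\varphi\,\boldsymbol\xi)+\operatorname{div}(\mu\mathbf J)=-\big(2\eta(\varphi)|D\mathbf v|^2+\tilde m(\varphi)|\nabla\mu|^2\big)\le0$$ holds pointwise.
   Context: $D\mathbf v=\frac12(\nabla\mathbf v+\nabla\mathbf v^T)$; $\mathbf a\otimes\mathbf b=\mathbf a\mathbf b^T$; the divergence of a matrix field is row-wise; $\mathbf T\mathbf v$ is the matrix–vector product with $\mathbf T$ symmetric. Here $\varphi$ is an order parameter for a mixture of two incompressible fluids, $\hat\rho(\varphi)$ the total mass density and $\widehat{\rho c}(\varphi)$ the difference of the partial mass densities, both expressed as functions of $\varphi$; $\frac{\partial f}{\partial\varphi}$, $\frac{\partial f}{\partial\nabla\varphi}$ are partial derivatives of $f(z,\mathbf p)$ in $z$ and $\mathbf p$. *)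

From Stdlib Require Import Reals ClassicalEpsilon.
From mathcomp Require Import ssreflect ssrfun ssrbool eqtype ssrnat fintype bigop.

Set Implicit Arguments.
Unset Strict Implicit.

Local Open Scope R_scope.

(* points of R^d and space-time fields on R^d x R *)
Definition Vec (d : nat) := 'I_d -> R.
Definition Fld (d : nat) := Vec d -> R -> R.

Definition sumI (d : nat) (F : 'I_d -> R) : R := \big[Rplus/R0]_(i < d) F i.

(* derivative of a real function of one variable (0 if it does not exist;
   only used at points where it exists by the smoothness hypotheses) *)
Definition deriv (g : R -> R) (s : R) : R :=
  match excluded_middle_informative (exists l, derivable_pt_lim g s l) with
  | left H => proj1_sig (constructive_indefinite_description _ H)
  | right _ => 0
  end.

Definition upd (d : nat) (x : Vec d) (i : 'I_d) (s : R) : Vec d :=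
  fun j => if j == i then s else x j.

Definition dx (d : nat) (i : 'I_d) (F : Fld d) : Fld d :=
  fun x t => deriv (fun s => F (upd x i s) t) (x i).
Definition dt (d : nat) (F : Fld d) : Fld d :=
  fun x t => deriv (fun s => F x s) t.

Definition is_open (d : nat) (O : Vec d -> Prop) : Prop :=
  forall x, O x -> exists delta, 0 < delta /\
    forall y : Vec d, (forall i, Rabs (y i - x i) < delta) -> O y.

Definition cont_on (d : nat) (U : Vec d -> R -> Prop) (F : Fld d) : Prop :=
  forall x t, U x t -> forall eps, 0 < eps -> exists delta, 0 < delta /\
    forall y s, U y s -> (forall i, Rabs (y i - x i) < delta) ->
      Rabs (s - t) < delta -> Rabs (F y s - F x t) < eps.

Definition partials_exist_on (d : nat) (U : Vec d -> R -> Prop) (F : Fld d) : Prop :=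
  forall x t, U x t ->
    (forall i, exists l, derivable_pt_lim (fun s => F (upd x i s) t) (x i) l) /\
    (exists l, derivable_pt_lim (fun s => F x s) t l).

Fixpoint C_on (d : nat) (U : Vec d -> R -> Prop) (k : nat) (F : Fld d) {struct k} : Prop :=
  match k with
  | O => cont_on U F
  | S k' => cont_on U F /\ partials_exist_on U F /\
            (forall i, C_on U k' (dx i F)) /\ C_on U k' (dt F)
  end.

Fixpoint CR (k : nat) (g : R -> R) {struct k} : Prop :=
  match k with
  | O => continuity g
  | S k' => continuity g /\ (forall z, exists l, derivable_pt_lim g z l) /\ CR k' (deriv g)
  end.
Definition smoothR (g : R -> R) : Prop := forall k, CR k g.

Definition smoothf (d : nat) (f : R -> Vec d -> R) : Prop :=
  forall k, C_on (fun _ _ => True) k (fun p z => f z p).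
Definition df_dz (d : nat) (f : R -> Vec d -> R) (z : R) (p : Vec d) : R :=
  deriv (fun s => f s p) z.
Definition df_dp (d : nat) (f : R -> Vec d -> R) (i : 'I_d) (z : R) (p : Vec d) : R :=
  deriv (fun s => f z (upd p i s)) (p i).

Definition grad (d : nat) (F : Fld d) : 'I_d -> Fld d := fun i => dx i F.
Definition gradAt (d : nat) (F : Fld d) (x : Vec d) (t : R) : Vec d :=
  fun i => dx i F x t.
(* D v = (grad v + grad v^T)/2, (grad v)_{ij} = d_j v_i *)
Definition symgrad (d : nat) (v : 'I_d -> Fld d) : 'I_d -> 'I_d -> Fld d :=
  fun i j x t => (dx j (v i) x t + dx i (v j) x t) / 2.
Definition divV (d : nat) (w : 'I_d -> Fld d) : Fld d :=
  fun x t => sumI (fun j => dx j (w j) x t).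
Definition divM (d : nat) (M : 'I_d -> 'I_d -> Fld d) : 'I_d -> Fld d :=
  fun i x t => sumI (fun j => dx j (M i j) x t).
Definition adv (d : nat) (v : 'I_d -> Fld d) (F : Fld d) : Fld d :=
  fun x t => sumI (fun i => v i x t * dx i F x t).
Definition tens (d : nat) (a b : 'I_d -> Fld d) : 'I_d -> 'I_d -> Fld d :=
  fun i j x t => a i x t * b j x t.
Definition matvec (d : nat) (M : 'I_d -> 'I_d -> Fld d) (w : 'I_d -> Fld d) : 'I_d -> Fld d :=
  fun i x t => sumI (fun j => M i j x t * w j x t).
Definition sqnormV (d : nat) (w : 'I_d -> Fld d) : Fld d :=
  fun x t => sumI (fun i => (w i x t) ^ 2).
Definition sqnormM (d : nat) (M : 'I_d -> 'I_d -> Fld d) : Fld d :=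
  fun x t => sumI (fun i => sumI (fun j => (M i j x t) ^ 2)).
Definition idM (d : nat) (q : Fld d) : 'I_d -> 'I_d -> Fld d :=
  fun i j x t => if i == j then q x t else 0.
Definition compF (d : nat) (g : R -> R) (F : Fld d) : Fld d := fun x t => g (F x t).

Section Quantities.
Variables (d : nat) (rhoh rhoc eta m : R -> R) (f a : R -> Vec d -> R)
          (v : 'I_d -> Fld d) (p phi mu : Fld d).

Definition a_phi : Fld d := fun x t => a (phi x t) (gradAt phi x t).
Definition xi : 'I_d -> Fld d := fun i x t => df_dp f i (phi x t) (gradAt phi x t).
Definition energy : Fld d :=
  fun x t => rhoh (phi x t) * sqnormV v x t / 2 + f (phi x t) (gradAt phi x t).
Definition flux : 'I_d -> Fld d := fun i x t => - (m (phi x t) * dx i mu x t).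
Definition phidot : Fld d := fun x t => dt phi x t + adv v phi x t.
Definition stress : 'I_d -> 'I_d -> Fld d :=
  fun i j x t => 2 * eta (phi x t) * symgrad v i j x t
                 - tens (grad phi) xi i j x t - idM p i j x t.

Definition momentum_eq (x : Vec d) (t : R) : Prop :=
  forall i,
    dt (fun y s => rhoh (phi y s) * v i y s) x t
    + divM (fun k j y s => rhoh (phi y s) * v k y s * v j y s) i x t
    - divM (fun k j y s => 2 * eta (phi y s) * symgrad v k j y s) i x t
    + dx i p x t
    = - divM (fun k j y s => a_phi y s * (dx k phi y s * dx j phi y s)) i x t.
Definition incompressible (x : Vec d) (t : R) : Prop := divV v x t = 0.
Definition phase_eq (x : Vec d) (t : R) : Prop :=
  dt (compF rhoc phi) x t + adv v (compF rhoc phi) x t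
  = divV (fun i y s => m (phi y s) * dx i mu y s) x t.
Definition chem_pot_eq (x : Vec d) (t : R) : Prop :=
  deriv rhoc (phi x t) * mu x t
  = df_dz f (phi x t) (gradAt phi x t)
    - divV (fun i y s => a_phi y s * dx i phi y s) x t
    - deriv rhoh (phi x t) * sqnormV v x t / 2.
Definition a_relation (x : Vec d) (t : R) : Prop :=
  forall i, xi i x t = a_phi x t * dx i phi x t.

Definition dissip_lhs (x : Vec d) (t : R) : R :=
  dt energy x t + adv v energy x t
  - divV (matvec stress v) x t
  - divV (fun i y s => phidot y s * xi i y s) x t
  + divV (fun i y s => mu y s * flux i y s) x t.
Definition dissip_rate (x : Vec d) (t : R) : R :=
  2 * eta (phi x t) * sqnormM (symgrad v) x t + m (phi x t) * sqnormV (grad mu) x t.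
End Quantities.

(* At a fixed point every term on the left is expanded by the product and chain
   rules, after which the identity is pure algebra. Dotting the momentum equation
   with v absorbs the kinetic part of d_t e + v.grad e together with the power of
   the viscous stress and of the pressure. The part xi.(d_t + v.grad) grad phi of
   the transport of f(phi, grad phi) cancels against div(phidot xi), leaving
   xi.(grad v)^T grad phi, which cancels the capillary stress grad phi (x) xi since
   xi = a grad phi is parallel to grad phi. The chemical potential and phase
   equations remove the terms in df/dphi and d rho/dphi, so only
   -(2 eta |Dv|^2 + m |grad mu|^2) survives. The analysis behind the expansion is
   the chain rule for f(phi, grad phi), which holds because continuous partial
   derivatives give Frechet differentiability, and the symmetry of the second
   derivatives of phi, from the mean value theorem applied to second differences. *)

From HB Require Import structures.
From Stdlib Require Import Reals Lra ClassicalEpsilon FunctionalExtensionality.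
From mathcomp Require Import ssreflect ssrfun ssrbool eqtype ssrnat seq fintype bigop.
Local Open Scope R_scope.
Set Implicit Arguments.
Unset Strict Implicit.

Lemma RplusA : associative Rplus. Proof. by move=> *; ring. Qed.
Lemma RplusC : commutative Rplus. Proof. by move=> *; ring. Qed.
Lemma Rplus0m : left_id R0 Rplus. Proof. by move=> *; ring. Qed.
Lemma RmultDl : left_distributive Rmult Rplus. Proof. by move=> *; ring. Qed.
Lemma RmultDr : right_distributive Rmult Rplus. Proof. by move=> *; ring. Qed.
Lemma Rmult0m : left_zero R0 Rmult. Proof. by move=> *; ring. Qed.
Lemma Rmultm0 : right_zero R0 Rmult. Proof. by move=> *; ring. Qed.
HB.instance Definition _ := Monoid.isComLaw.Build R R0 Rplus RplusA RplusC Rplus0m.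
HB.instance Definition _ := Monoid.isMulLaw.Build R R0 Rmult Rmult0m Rmultm0.
HB.instance Definition _ := Monoid.isAddLaw.Build R Rmult Rplus RmultDl RmultDr.

Section FiniteSums.
Variable d : nat.
Implicit Types (F G : 'I_d -> R) (c : R).

Lemma eq_sumI F G : (forall i, F i = G i) -> sumI F = sumI G.
Proof. by move=> FG; apply: eq_bigr => i _. Qed.

Lemma sumID F G : sumI (fun i => F i + G i) = sumI F + sumI G.
Proof. exact: big_split. Qed.

Lemma sumI_distrr c F : c * sumI F = sumI (fun i => c * F i).
Proof. exact: big_distrr. Qed.

Lemma sumI_distrl c F : sumI F * c = sumI (fun i => F i * c).
Proof. exact: big_distrl. Qed.

Lemma sumIB F G : sumI (fun i => F i - G i) = sumI F - sumI G.
Proof. by rewrite /sumI; elim/big_rec3: _ => [|i y1 y2 y3 _ ->]; ring. Qed.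

Lemma sumIN F : sumI (fun i => - F i) = - sumI F.
Proof. by rewrite /sumI; elim/big_rec2: _ => [|i y1 y2 _ ->]; ring. Qed.

Lemma exchange_sumI (F : 'I_d -> 'I_d -> R) :
  sumI (fun i => sumI (fun j => F i j)) = sumI (fun j => sumI (fun i => F i j)).
Proof. exact: exchange_big. Qed.

Lemma sumI_kron F i : sumI (fun j => if i == j then F j else 0) = F i.
Proof.
rewrite /sumI (bigD1 i) //= eqxx big1 ?Rplus_0_r // => j /negbTE.
by rewrite eq_sym => ->.
Qed.

Lemma ler_sumI F G : (forall i, F i <= G i) -> sumI F <= sumI G.
Proof.
move=> FG; rewrite /sumI; elim/big_rec2: _ => [|i y1 y2 _]; first lra.
by have := FG i; lra.
Qed.

Lemma sumI_ge0 F : (forall i, 0 <= F i) -> 0 <= sumI F.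
Proof.
move=> F0; rewrite /sumI; elim/big_rec: _ => [|i y _]; first lra.
by have := F0 i; lra.
Qed.

Lemma sumI_ge_term F : (forall i, 0 <= F i) -> forall i, F i <= sumI F.
Proof.
move=> F0 i; rewrite -{1}(sumI_kron F i); apply: ler_sumI => j.
by case: eqP => _; [lra | exact: F0].
Qed.

Lemma abs_sumI_le F : Rabs (sumI F) <= sumI (fun i => Rabs (F i)).
Proof.
rewrite /sumI; elim/big_rec2: _ => [|i y1 y2 _ IH]; first by rewrite Rabs_R0; lra.
by apply: Rle_trans (Rabs_triang _ _) _; lra.
Qed.

Lemma exists_common_radius (P : 'I_d -> R -> Prop) :
  (forall k del del', P k del -> 0 < del' <= del -> P k del') ->
  (forall k, exists del, 0 < del /\ P k del) ->
  exists del, 0 < del /\ forall k, P k del.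
Proof.
move=> P_le P_ex.
suff [del [del0 Pdel]] : exists del, 0 < del /\ forall k, k \in enum 'I_d -> P k del.
  by exists del; split=> // k; apply: Pdel; rewrite mem_enum.
elim: (enum 'I_d) => [|k s [del [del0 Pdel]]]; first by exists 1; split=> //; lra.
have [dk [dk0 Pdk]] := P_ex k.
have m1 := Rmin_l del dk; have m2 := Rmin_r del dk.
exists (Rmin del dk); split; first exact: Rmin_glb_lt.
move=> j; rewrite in_cons => /orP [/eqP -> | js].
- by apply: P_le Pdk _; split=> //; apply: Rmin_glb_lt.
- by apply: P_le (Pdel j js) _; split=> //; apply: Rmin_glb_lt.
Qed.

Lemma exchange_sumI_weighted (a b : 'I_d -> R) (F : 'I_d -> 'I_d -> R) :
  sumI (fun j => a j * sumI (fun i => b i * F i j))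
  = sumI (fun i => b i * sumI (fun j => a j * F i j)).
Proof.
rewrite (eq_sumI (G := fun j => sumI (fun i => a j * (b i * F i j)))); last first.
  by move=> j; exact: sumI_distrr.
rewrite exchange_sumI; apply: eq_sumI => i; rewrite sumI_distrr; apply: eq_sumI => j; ring.
Qed.

Lemma sumI_kron_mul F G i : sumI (fun j => (if i == j then F i else 0) * G j) = F i * G i.
Proof.
rewrite -(sumI_kron (fun j => F i * G j)); apply: eq_sumI => j.
by case: eqP => [->|_]; ring.
Qed.

Lemma sumI_symmetric_part_sq (A : 'I_d -> 'I_d -> R) :
  sumI (fun i => sumI (fun j => (A i j + A j i) / 2 * A j i))
  = sumI (fun i => sumI (fun j => ((A i j + A j i) / 2) ^ 2)).
Proof.
apply: (Rmult_eq_reg_l 2); last lra.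
rewrite [in LHS](_ : forall r, 2 * r = r + r); last by move=> r; ring.
rewrite {2}exchange_sumI -sumID sumI_distrr; apply: eq_sumI => i.
rewrite -sumID sumI_distrr; apply: eq_sumI => j; field.
Qed.

End FiniteSums.

Lemma sumI_telescope n (g : nat -> R) : sumI (fun k : 'I_n => g k.+1 - g k) = g n - g O.
Proof.
rewrite /sumI; elim: n => [|n IH]; first by rewrite big_ord0; ring.
by rewrite big_ord_recr /= IH; ring.
Qed.


Lemma derivE g s l : derivable_pt_lim g s l -> deriv g s = l.
Proof.
move=> gl; rewrite /deriv; case: excluded_middle_informative => [ex|nex].
- by case: constructive_indefinite_description => l' gl' /=; exact: uniqueness_limite gl' gl.
- by exfalso; apply: nex; exists l.
Qed.

Lemma deriv_lim g s : (exists l, derivable_pt_lim g s l) -> derivable_pt_lim g s (deriv g s).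
Proof. by case=> l gl; rewrite (derivE gl). Qed.

Lemma derivable_pt_lim_local (g1 g2 : R -> R) s0 del l : 0 < del ->
  (forall s, Rabs (s - s0) < del -> g1 s = g2 s) ->
  derivable_pt_lim g1 s0 l -> derivable_pt_lim g2 s0 l.
Proof.
move=> del0 g12 g1l eps eps0; have [dl Hdl] := g1l eps eps0.
have mpos : 0 < Rmin dl del by apply: Rmin_glb_lt => //; exact: cond_pos.
exists (mkposreal _ mpos) => h h0 /= hlt.
have m1 := Rmin_l dl del; have m2 := Rmin_r dl del.
rewrite -!g12; first (apply: Hdl => //; lra).
- by rewrite Rminus_diag Rabs_R0.
- by rewrite Rplus_minus_l; lra.
Qed.

Lemma deriv_local (g1 g2 : R -> R) s0 del : 0 < del ->
  (forall s, Rabs (s - s0) < del -> g1 s = g2 s) -> deriv g1 s0 = deriv g2 s0.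
Proof.
move=> del0 g12.
have g21 : forall s, Rabs (s - s0) < del -> g2 s = g1 s by move=> s /g12.
case: (classic (exists l, derivable_pt_lim g1 s0 l)) => [[l g1l]|nder1].
  by rewrite (derivE g1l) (derivE (derivable_pt_lim_local del0 g12 g1l)).
have nder2 : ~ exists l, derivable_pt_lim g2 s0 l.
  by case=> l g2l; apply: nder1; exists l; exact: derivable_pt_lim_local del0 g21 g2l.
rewrite /deriv.
by do 2![case: excluded_middle_informative => // ?].
Qed.

Lemma derivable_pt_lim_sumI n (F : 'I_n -> R -> R) (l : 'I_n -> R) s :
  (forall i, derivable_pt_lim (F i) s (l i)) ->
  derivable_pt_lim (fun y => sumI (fun i => F i y)) s (sumI l).
Proof.
rewrite /sumI; elim: n F l => [|n IH] F l Fl.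
  by rewrite big_ord0; apply: (derivable_pt_lim_local Rlt_0_1 _ (derivable_pt_lim_const 0 s))
     => y _; rewrite big_ord0.
rewrite big_ord_recr /=.
apply: (derivable_pt_lim_local Rlt_0_1 _
  (derivable_pt_lim_plus _ _ _ _ _ (IH _ _ (fun i => Fl (widen_ord (leqnSn n) i))) (Fl ord_max))).
by move=> y _; rewrite big_ord_recr.
Qed.

Lemma mvt_bound (g g' : R -> R) a b L eps :
  (forall c, derivable_pt_lim g c (g' c)) ->
  (forall c, Rabs (c - a) <= Rabs (b - a) -> Rabs (g' c - L) <= eps) ->
  Rabs (g b - g a - L * (b - a)) <= eps * Rabs (b - a).
Proof.
move=> gder g'L.
have [c [gba cab]] : exists c, g b - g a = g' c * (b - a) /\ Rabs (c - a) <= Rabs (b - a).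
  case: (Rtotal_order a b) => [ab|[<-|ba]].
  - have [c [E cab]] := MVT_cor2 g g' a b ab (fun c _ => gder c).
    by exists c; split=> //; rewrite !Rabs_right; lra.
  - by exists a; split; [ring | lra].
  - have [c [E cab]] := MVT_cor2 g g' b a ba (fun c _ => gder c).
    exists c; split; first lra.
    by rewrite (Rabs_left (b - a)) ?Rabs_left; lra.
rewrite gba -Rmult_minus_distr_r Rabs_mult.
by apply: Rmult_le_compat_r; [exact: Rabs_pos | exact: g'L].
Qed.

Lemma second_difference_mvt (g g1 g12 : R -> R -> R) a b h :
  0 < h ->
  (forall s u, a <= s <= a + h -> b <= u <= b + h ->
     derivable_pt_lim (fun s' => g s' u) s (g1 s u) /\
     derivable_pt_lim (fun u' => g1 s u') u (g12 s u)) ->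
  exists c e, a < c < a + h /\ b < e < b + h /\
    g (a + h) (b + h) - g (a + h) b - g a (b + h) + g a b = h * h * g12 c e.
Proof.
move=> h0 gder.
have [c [Ec ac]] := MVT_cor2 (fun s => g s (b + h) - g s b) (fun s => g1 s (b + h) - g1 s b)
  a (a + h) ltac:(lra) (fun c ac => derivable_pt_lim_minus _ _ _ _ _
    (proj1 (gder c (b + h) ac ltac:(lra))) (proj1 (gder c b ac ltac:(lra)))).
have [e [Ee be]] := MVT_cor2 (g1 c) (g12 c) b (b + h) ltac:(lra)
  (fun e be => proj2 (gder c e ltac:(lra) be)).
exists c, e; split=> //; split=> //.
have -> : h * h * g12 c e = g12 c e * (b + h - b) * (a + h - a) by ring.
by rewrite -Ee -Ec; ring.
Qed.

Lemma clairaut (g g1 g2 g12 g21 : R -> R -> R) a b del0 :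
  0 < del0 ->
  (forall s u, Rabs (s - a) < del0 -> Rabs (u - b) < del0 ->
    [/\ derivable_pt_lim (fun s' => g s' u) s (g1 s u),
        derivable_pt_lim (fun u' => g s u') u (g2 s u),
        derivable_pt_lim (fun u' => g1 s u') u (g12 s u) &
        derivable_pt_lim (fun s' => g2 s' u) s (g21 s u)]) ->
  (forall eps, 0 < eps -> exists del, 0 < del /\ forall s u,
     Rabs (s - a) < del -> Rabs (u - b) < del ->
     Rabs (g12 s u - g12 a b) < eps /\ Rabs (g21 s u - g21 a b) < eps) ->
  g12 a b = g21 a b.
Proof.
move=> del00 gder mixed_cont.
suff close : forall eps, 0 < eps -> Rabs (g12 a b - g21 a b) < 2 * eps.
  case: (Req_dec (g12 a b - g21 a b) 0) => [|ne]; first lra.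
  have := Rabs_pos_lt _ ne; have := close (Rabs (g12 a b - g21 a b) / 4); lra.
move=> eps eps0; have [del [del_pos close]] := mixed_cont eps eps0.
pose h := Rmin del del0 / 2.
have h0 : 0 < h by have := Rmin_glb_lt _ _ _ del_pos del00; rewrite /h; lra.
have hdel : h < del by have := Rmin_l del del0; rewrite /h; lra.
have hdel0 : h < del0 by have := Rmin_r del del0; rewrite /h; lra.
(* Both mixed partials equal the second difference over [h * h] somewhere in the h-square. *)
have inbox s u : a <= s <= a + h -> b <= u <= b + h ->
    Rabs (s - a) < del0 /\ Rabs (u - b) < del0.
  by move=> ? ?; rewrite !Rabs_right; lra.
have [c [e [ac [be E12]]]] := @second_difference_mvt g g1 g12 a b h h0 (fun s u sa ub =>
  let: And4 gs _ g1u _ := gder s u (proj1 (inbox s u sa ub)) (proj2 (inbox s u sa ub)) in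
  conj gs g1u).
have [c' [e' [bc' [ae' E21]]]] := @second_difference_mvt
  (fun u s => g s u) (fun u s => g2 s u) (fun u s => g21 s u) b a h h0 (fun u s ub sa =>
  let: And4 _ gu _ g2s := gder s u (proj1 (inbox s u sa ub)) (proj2 (inbox s u sa ub)) in
  conj gu g2s).
have E : g12 c e = g21 e' c'.
  apply: (Rmult_eq_reg_l (h * h)); last by apply: Rgt_not_eq; nra.
  rewrite -E12 -E21 /=; ring.
have [close12 _] := close c e ltac:(rewrite Rabs_right; lra) ltac:(rewrite Rabs_right; lra).
have [_ close21] := close e' c' ltac:(rewrite Rabs_right; lra) ltac:(rewrite Rabs_right; lra).
rewrite E in close12.
have := Rabs_triang (g12 a b - g21 e' c') (g21 e' c' - g21 a b).
rewrite (Rabs_minus_sym (g12 a b)).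
have -> : g12 a b - g21 e' c' + (g21 e' c' - g21 a b) = g12 a b - g21 a b by ring.
lra.
Qed.

Section Directions.
Variable d : nat.
Implicit Types (x y : Vec d) (t s : R) (o : option 'I_d) (F G : Fld d).

(* Space-time directions: [Some i] is the coordinate x_i, [None] is time. *)
Definition dd o F : Fld d := if o is Some i then dx i F else dt F.
Definition movex x o s : Vec d := if o is Some j then upd x j s else x.
Definition movet t o s : R := if o is Some _ then t else s.
Definition coord x t o : R := if o is Some j then x j else t.

Definition has_dd o F x t l :=
  derivable_pt_lim (fun s => F (movex x o s) (movet t o s)) (coord x t o) l.

Lemma upd_id x j : upd x j (x j) = x.
Proof. by apply: functional_extensionality => i; rewrite /upd; case: eqP => [->|]. Qed.

Lemma upd_eq x j s : upd x j s j = s.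
Proof. by rewrite /upd eqxx. Qed.

Lemma upd_upd x j s s' : upd (upd x j s) j s' = upd x j s'.
Proof. by apply: functional_extensionality => i; rewrite /upd; case: eqP. Qed.

Lemma movex_coord x t o : movex x o (coord x t o) = x.
Proof. by case: o => //= j; exact: upd_id. Qed.

Lemma movet_coord x t o : movet t o (coord x t o) = t.
Proof. by case: o. Qed.

Lemma coord_move x t o s : coord (movex x o s) (movet t o s) o = s.
Proof. by case: o => //= j; rewrite /upd eqxx. Qed.

Lemma coord_move_neq x t o1 o2 s : o1 != o2 ->
  coord (movex x o1 s) (movet t o1 s) o2 = coord x t o2.
Proof.
case: o1 => [i|]; case: o2 => [j|] //= ne; rewrite /upd.
by case: eqP => // ji; rewrite ji eqxx in ne.
Qed.

Lemma movex_movex x o s s' : movex (movex x o s) o s' = movex x o s'.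
Proof. by case: o => //= j; exact: upd_upd. Qed.

Lemma movet_movet t o s s' : movet (movet t o s) o s' = movet t o s'.
Proof. by case: o. Qed.

Lemma movex_comm x o1 o2 s u : o1 != o2 ->
  movex (movex x o1 s) o2 u = movex (movex x o2 u) o1 s.
Proof.
case: o1 => [i|]; case: o2 => [j|] //= ne.
apply: functional_extensionality => k; rewrite /upd.
by case: (eqVneq k j) => [->|//]; case: eqP => // ji; rewrite ji eqxx in ne.
Qed.

Lemma movet_comm t o1 o2 s u : o1 != o2 ->
  movet (movet t o1 s) o2 u = movet (movet t o2 u) o1 s.
Proof. by case: o1; case: o2. Qed.

Lemma has_ddE o F x t l : has_dd o F x t l -> dd o F x t = l.
Proof. by case: o => [i|] Fl; exact: (derivE Fl). Qed.

Lemma has_dd_deriv o F x t : (exists l, has_dd o F x t l) -> has_dd o F x t (dd o F x t).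
Proof. by case: o => [i|] Fl; exact: (deriv_lim Fl). Qed.

Lemma has_dd_const o c x t : has_dd o (fun _ _ => c) x t 0.
Proof. exact: derivable_pt_lim_const. Qed.

Lemma has_dd_add o F G x t l1 l2 : has_dd o F x t l1 -> has_dd o G x t l2 ->
  has_dd o (fun y s => F y s + G y s) x t (l1 + l2).
Proof. exact: derivable_pt_lim_plus. Qed.

Lemma has_dd_sub o F G x t l1 l2 : has_dd o F x t l1 -> has_dd o G x t l2 ->
  has_dd o (fun y s => F y s - G y s) x t (l1 - l2).
Proof. exact: derivable_pt_lim_minus. Qed.

Lemma has_dd_opp o F x t l : has_dd o F x t l -> has_dd o (fun y s => - F y s) x t (- l).
Proof. exact: derivable_pt_lim_opp. Qed.

Lemma has_dd_mul o F G x t l1 l2 : has_dd o F x t l1 -> has_dd o G x t l2 ->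
  has_dd o (fun y s => F y s * G y s) x t (l1 * G x t + F x t * l2).
Proof.
by move=> F1 G2; have := derivable_pt_lim_mult _ _ _ _ _ F1 G2; rewrite movex_coord movet_coord.
Qed.

Lemma has_dd_mulr o F c x t l : has_dd o F x t l -> has_dd o (fun y s => F y s * c) x t (l * c).
Proof.
move=> Fl; have := has_dd_mul Fl (has_dd_const o c x t).
by rewrite Rmult_0_r Rplus_0_r.
Qed.

Lemma has_dd_comp o (g : R -> R) F x t l : (forall z, exists l, derivable_pt_lim g z l) ->
  has_dd o F x t l -> has_dd o (fun y s => g (F y s)) x t (deriv g (F x t) * l).
Proof.
move=> gder Fl; have := derivable_pt_lim_comp _ g _ _ _ Fl (deriv_lim (gder _)).
by rewrite movex_coord movet_coord.
Qed.

Lemma has_dd_sqr o F x t l :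
  has_dd o F x t l -> has_dd o (fun y s => F y s ^ 2) x t (2 * F x t * l).
Proof.
move=> Fl; have := has_dd_mul Fl Fl; rewrite /has_dd.
have -> : l * F x t + F x t * l = 2 * F x t * l by ring.
by apply: derivable_pt_lim_local Rlt_0_1 _ => s _ /=; ring.
Qed.

Lemma has_dd_sum o (F : 'I_d -> Fld d) x t (l : 'I_d -> R) :
  (forall i, has_dd o (F i) x t (l i)) ->
  has_dd o (fun y s => sumI (fun i => F i y s)) x t (sumI l).
Proof. exact: derivable_pt_lim_sumI. Qed.

End Directions.

Section Smoothness.
Variables (d : nat) (U : Vec d -> R -> Prop).
Implicit Types (x y : Vec d) (t s : R) (o : option 'I_d) (F : Fld d).

Definition near del x t y s := (forall i, Rabs (y i - x i) < del) /\ Rabs (s - t) < del.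

Definition open_st := forall x t, U x t ->
  exists del, 0 < del /\ forall y s, near del x t y s -> U y s.

Lemma near_le del del' x t y s : del <= del' -> near del x t y s -> near del' x t y s.
Proof. by move=> le [yx st]; split=> [i|]; [have := yx i|]; lra. Qed.

Lemma near_refl del x t : 0 < del -> near del x t x t.
Proof. by move=> del0; split=> [i|]; rewrite Rminus_diag Rabs_R0. Qed.

Lemma near_move del x t y s o u : near del x t y s -> Rabs (u - coord x t o) < del ->
  near del x t (movex y o u) (movet s o u).
Proof.
case=> yx st; case: o => [j|] /= uj; split=> // i.
by rewrite /upd; case: eqP => [->|].
Qed.

Lemma cont_at F x t : open_st -> cont_on U F -> U x t ->
  forall eps, 0 < eps -> exists del, 0 < del /\
    forall y s, near del x t y s -> Rabs (F y s - F x t) < eps.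
Proof.
move=> Uopen Fcont Uxt eps eps0.
have [d1 [d1_pos Fd1]] := Fcont x t Uxt eps eps0.
have [d2 [d2_pos Ud2]] := Uopen x t Uxt.
have m1 := Rmin_l d1 d2; have m2 := Rmin_r d1 d2.
exists (Rmin d1 d2); split; first exact: Rmin_glb_lt.
move=> y s [yx st]; apply: Fd1; last lra.
- by apply: Ud2; split=> [i|]; [have := yx i|]; lra.
- by move=> i; have := yx i; lra.
Qed.

Lemma C_on_succ k F : C_on U k.+1 F -> C_on U k F.
Proof.
elim: k F => [|k IH] F; first by case.
by case=> Fc [Fder [Fx Ft]]; split=> //; split=> //; split=> [i|]; [exact: IH | exact: IH].
Qed.

Lemma C_on_cont k F : C_on U k F -> cont_on U F.
Proof. by case: k => [|k] //= []. Qed.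

Lemma C_on_dd k o F : C_on U k.+1 F -> C_on U k (dd o F).
Proof. by case=> _ [_ [Fx Ft]]; case: o. Qed.

Lemma C_on_has_dd k o F x t : C_on U k.+1 F -> U x t -> has_dd o F x t (dd o F x t).
Proof.
case=> _ [Fder _] Uxt; apply: has_dd_deriv; have [Fx Ft] := Fder x t Uxt.
by case: o => [j|]; [exact: Fx | exact: Ft].
Qed.

Lemma dd_local o (F1 F2 : Fld d) x t : open_st -> U x t ->
  (forall y s, U y s -> F1 y s = F2 y s) -> dd o F1 x t = dd o F2 x t.
Proof.
move=> Uopen Uxt F12; have [del [del0 Udel]] := Uopen x t Uxt.
have local := @deriv_local (fun s => F1 (movex x o s) (movet t o s))
  (fun s => F2 (movex x o s) (movet t o s)) (coord x t o) del del0.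
case: o local => [j|] /= local; apply: local => s sx; apply: F12; apply: Udel.
- exact: (near_move (o := Some j) (near_refl x t del0) sx).
- exact: (near_move (o := None) (near_refl x t del0) sx).
Qed.

Lemma has_dd_move1 o1 o2 F x t s u l : o1 != o2 ->
  has_dd o1 F (movex (movex x o1 s) o2 u) (movet (movet t o1 s) o2 u) l ->
  derivable_pt_lim (fun s' => F (movex (movex x o1 s') o2 u) (movet (movet t o1 s') o2 u)) s l.
Proof.
move=> ne; rewrite /has_dd coord_move_neq 1?eq_sym // coord_move.
apply: derivable_pt_lim_local Rlt_0_1 _ => s' _.
by rewrite movex_comm 1?eq_sym // movet_comm 1?eq_sym // movex_movex movet_movet.
Qed.

Lemma has_dd_move2 o1 o2 F x t s u l :
  has_dd o2 F (movex (movex x o1 s) o2 u) (movet (movet t o1 s) o2 u) l ->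
  derivable_pt_lim (fun u' => F (movex (movex x o1 s) o2 u') (movet (movet t o1 s) o2 u')) u l.
Proof.
rewrite /has_dd coord_move; apply: derivable_pt_lim_local Rlt_0_1 _ => u' _.
by rewrite movex_movex movet_movet.
Qed.

Lemma dd_comm o1 o2 F x t : open_st -> C_on U 2 F -> U x t -> o1 != o2 ->
  dd o1 (dd o2 F) x t = dd o2 (dd o1 F) x t.
Proof.
move=> Uopen F2 Uxt ne.
pose Px s u := movex (movex x o1 s) o2 u; pose Pt s u := movet (movet t o1 s) o2 u.
have [del0 [del00 Udel0]] := Uopen x t Uxt.
have nearP del s u : 0 < del -> Rabs (s - coord x t o1) < del -> Rabs (u - coord x t o2) < del ->
    near del x t (Px s u) (Pt s u).
  move=> del_pos sx ux; apply: near_move ux; exact: near_move (near_refl _ _ del_pos) sx.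
have := @clairaut (fun s u => F (Px s u) (Pt s u)) (fun s u => dd o1 F (Px s u) (Pt s u))
  (fun s u => dd o2 F (Px s u) (Pt s u)) (fun s u => dd o2 (dd o1 F) (Px s u) (Pt s u))
  (fun s u => dd o1 (dd o2 F) (Px s u) (Pt s u)) (coord x t o1) (coord x t o2) del0 del00.
rewrite /Px /Pt !movex_coord !movet_coord => -> //.
- move=> s u sx ux; have UP := Udel0 _ _ (nearP _ s u del00 sx ux).
  have F1 o : C_on U 1 (dd o F) := C_on_dd o F2.
  split; [apply: has_dd_move1 ne _ | apply: has_dd_move2 |
          apply: has_dd_move2 | apply: has_dd_move1 ne _].
  + exact: C_on_has_dd F2 UP.
  + exact: C_on_has_dd F2 UP.
  + exact: C_on_has_dd (F1 o1) UP.
  + exact: C_on_has_dd (F1 o2) UP.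
- move=> eps eps0.
  have [e1 [e1_pos C1]] := cont_at Uopen (C_on_cont (C_on_dd o2 (C_on_dd o1 F2))) Uxt eps0.
  have [e2 [e2_pos C2]] := cont_at Uopen (C_on_cont (C_on_dd o1 (C_on_dd o2 F2))) Uxt eps0.
  have m1 := Rmin_l e1 e2; have m2 := Rmin_r e1 e2.
  have e_pos : 0 < Rmin e1 e2 by exact: Rmin_glb_lt.
  exists (Rmin e1 e2); split=> // s u sx ux.
  have [Pi Pt'] := nearP _ s u e_pos sx ux; rewrite /Px /Pt in Pi Pt'.
  by split; [apply: C1 | apply: C2]; split=> [i|]; try (have := Pi i); lra.
Qed.

End Smoothness.

Lemma open_st_cylinder d (Omega : Vec d -> Prop) T :
  is_open Omega -> open_st (fun x t => Omega x /\ 0 < t < T).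
Proof.
move=> Omega_open x t [Ox tT]; have [del [del0 Odel]] := Omega_open x Ox.
have r1 := Rmin_l del (Rmin t (T - t)); have r2 := Rmin_r del (Rmin t (T - t)).
have r3 := Rmin_l t (T - t); have r4 := Rmin_r t (T - t).
exists (Rmin del (Rmin t (T - t))); split.
  by apply: Rmin_glb_lt => //; apply: Rmin_glb_lt; lra.
move=> y s [yx /Rabs_def2 st]; split; last lra.
by apply: Odel => i; have := yx i; lra.
Qed.

Lemma derivable_pt_lim_lipschitz g s0 l : derivable_pt_lim g s0 l ->
  exists del, 0 < del /\ forall h, Rabs h < del ->
    Rabs (g (s0 + h) - g s0) <= (Rabs l + 1) * Rabs h.
Proof.
move=> gl; have [del gdel] := gl 1 Rlt_0_1.
exists del; split=> [|h hdel]; first exact: cond_pos.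
case: (Req_dec h 0) => [->|h0]; first by rewrite Rplus_0_r Rminus_diag Rabs_R0; lra.
have -> : Rabs (g (s0 + h) - g s0) = Rabs ((g (s0 + h) - g s0) / h) * Rabs h.
  by rewrite -Rabs_mult; congr Rabs; field.
have := Rabs_triang_inv ((g (s0 + h) - g s0) / h) l; have := gdel h h0 hdel.
by have := Rabs_pos_lt _ h0; nra.
Qed.

Section Differentiability.
Variable d : nat.
Implicit Types (G : Fld d) (p q : Vec d).

Definition frechet_at G p0 z0 (A : Vec d) (B : R) := forall eps, 0 < eps ->
  exists del, 0 < del /\ forall q w, near del p0 z0 q w ->
    Rabs (G q w - G p0 z0 - (sumI (fun k => A k * (q k - p0 k)) + B * (w - z0)))
    <= eps * (sumI (fun k => Rabs (q k - p0 k)) + Rabs (w - z0)).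

Lemma curve_lipschitz (c : 'I_d -> R -> R) (z : R -> R) s0 (lc : 'I_d -> R) lz :
  (forall k, derivable_pt_lim (c k) s0 (lc k)) -> derivable_pt_lim z s0 lz ->
  exists L del, [/\ 0 < L, 0 < del & forall h, Rabs h < del ->
    (forall k, Rabs (c k (s0 + h) - c k s0) <= L * Rabs h) /\
    sumI (fun k => Rabs (c k (s0 + h) - c k s0)) + Rabs (z (s0 + h) - z s0) <= L * Rabs h].
Proof.
move=> cl zl.
have lc0 k : 0 <= Rabs (lc k) + 1 by have := Rabs_pos (lc k); lra.
have [dc [dc0 c_lip]] : exists del, 0 < del /\ forall k h, Rabs h < del ->
    Rabs (c k (s0 + h) - c k s0) <= (Rabs (lc k) + 1) * Rabs h.
  apply: (exists_common_radius (P := fun k del => forall h, Rabs h < del -> _)).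
    by move=> k del del' P_del [_ le] h hdel'; apply: P_del; lra.
  by move=> k; exact: derivable_pt_lim_lipschitz (cl k).
have [dz [dz0 z_lip]] := derivable_pt_lim_lipschitz zl.
have := sumI_ge0 lc0; have := Rabs_pos lz => lz0 lc_sum0.
exists (sumI (fun k => Rabs (lc k) + 1) + (Rabs lz + 1)), (Rmin dc dz).
split=> [||h hdel]; [lra | exact: Rmin_glb_lt |].
have c_inc k := c_lip k h (Rlt_le_trans _ _ _ hdel (Rmin_l _ _)).
have z_inc := z_lip h (Rlt_le_trans _ _ _ hdel (Rmin_r _ _)).
have := Rabs_pos h; split=> [k|].
  by have := c_inc k; have := sumI_ge_term lc0 k; nra.
by have := ler_sumI c_inc; rewrite -sumI_distrl; nra.
Qed.

Lemma frechet_remainder G (c : 'I_d -> R -> R) (z : R -> R) s0 A B (lc : 'I_d -> R) lz :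
  frechet_at G (fun k => c k s0) (z s0) A B ->
  (forall k, derivable_pt_lim (c k) s0 (lc k)) -> derivable_pt_lim z s0 lz ->
  derivable_pt_lim
    (fun s => G (fun k => c k s) (z s) - (sumI (fun k => A k * c k s) + B * z s)) s0 0.
Proof.
move=> GAB cl zl eps eps0.
have [L [dc [L0 dc0 c_lip]]] := curve_lipschitz cl zl.
have [dG [dG0 G_frechet]] := GAB (eps / (2 * L)) ltac:(apply: Rdiv_lt_0_compat; lra).
have m1 := Rmin_l dc (dG / L); have m2 := Rmin_r dc (dG / L).
have del0 : 0 < Rmin dc (dG / L) by apply: Rmin_glb_lt => //; exact: Rdiv_lt_0_compat.
exists (mkposreal _ del0) => h h0 /= hdel.
have hL : L * Rabs h < dG.
  by apply: (Rmult_lt_reg_r (/ L)); [exact: Rinv_0_lt_compat | field_simplify; lra].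
have h_pos := Rabs_pos_lt _ h0.
have [c_inc inc_sum] := c_lip h ltac:(lra).
have near_h : near dG (fun k => c k s0) (z s0) (fun k => c k (s0 + h)) (z (s0 + h)).
  have := sumI_ge0 (fun k => Rabs_pos (c k (s0 + h) - c k s0)).
  by split=> [k|]; [have := c_inc k | ]; lra.
have lin_inc : sumI (fun k => A k * (c k (s0 + h) - c k s0))
    = sumI (fun k => A k * c k (s0 + h)) - sumI (fun k => A k * c k s0).
  by rewrite -sumIB; apply: eq_sumI => k; ring.
have := G_frechet _ _ near_h; rewrite lin_inc => rest.
have rest_lt : Rabs (G (fun k => c k (s0 + h)) (z (s0 + h)) - G (fun k => c k s0) (z s0)
    - (sumI (fun k => A k * c k (s0 + h)) - sumI (fun k => A k * c k s0)
       + B * (z (s0 + h) - z s0))) < eps * Rabs h.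
  have e2L : 0 <= eps / (2 * L) by apply: Rlt_le; apply: Rdiv_lt_0_compat; lra.
  have := Rmult_le_compat_l _ _ _ e2L inc_sum.
  have -> : eps / (2 * L) * (L * Rabs h) = eps / 2 * Rabs h by field; lra.
  nra.
rewrite Rminus_0_r /Rdiv Rabs_mult Rabs_inv.
apply: (Rmult_lt_reg_r (Rabs h)) => //; rewrite Rmult_assoc Rinv_l; last lra.
by apply: Rle_lt_trans rest_lt; right; rewrite Rmult_1_r; f_equal; ring.
Qed.

Lemma frechet_chain G (c : 'I_d -> R -> R) (z : R -> R) s0 A B (lc : 'I_d -> R) lz :
  frechet_at G (fun k => c k s0) (z s0) A B ->
  (forall k, derivable_pt_lim (c k) s0 (lc k)) -> derivable_pt_lim z s0 lz ->
  derivable_pt_lim (fun s => G (fun k => c k s) (z s)) s0 (sumI (fun k => A k * lc k) + B * lz).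
Proof.
move=> GAB cl zl.
have lin : derivable_pt_lim (fun s => sumI (fun k => A k * c k s) + B * z s) s0
    (sumI (fun k => A k * lc k) + B * lz).
  exact: derivable_pt_lim_plus
    (derivable_pt_lim_sumI (fun k => derivable_pt_lim_scal _ (A k) _ _ (cl k)))
    (derivable_pt_lim_scal _ B _ _ zl).
have := derivable_pt_lim_plus _ _ _ _ _ lin (frechet_remainder GAB cl zl).
by rewrite Rplus_0_r; apply: derivable_pt_lim_local Rlt_0_1 _ => s _; rewrite /plus_fct; ring.
Qed.

Section ContinuouslyDifferentiable.
Variables (G : Fld d).
Hypothesis G_C1 : C_on (fun _ _ => True) 1 G.

Lemma C1_dx_lim y w k c : derivable_pt_lim (fun s => G (upd y k s) w) c (dx k G (upd y k c) w).
Proof.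
have := C_on_has_dd (Some k) G_C1 (x := upd y k c) (t := w) I.
rewrite /has_dd /= upd_eq; apply: derivable_pt_lim_local Rlt_0_1 _ => s _.
by rewrite upd_upd.
Qed.

Lemma C1_dt_lim y c : derivable_pt_lim (fun s => G y s) c (dt G y c).
Proof. exact: (C_on_has_dd None G_C1 (x := y) (t := c) I). Qed.

Definition splice q p n : Vec d := fun j => if (j < n)%N then q j else p j.

Lemma splice_succ q p (k : 'I_d) : splice q p k.+1 = upd (splice q p k) k (q k).
Proof.
apply: functional_extensionality => j; rewrite /splice /upd ltnS leq_eqVlt.
case: (eqVneq j k) => [->|jk]; first by rewrite eqxx.
by case: eqP => [/ord_inj jk'|//]; rewrite jk' eqxx in jk.
Qed.

Lemma splice_upd q p (k : 'I_d) : upd (splice q p k) k (p k) = splice q p k.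
Proof.
by apply: functional_extensionality => j; rewrite /splice /upd; case: eqP => [->|]; rewrite ?ltnn.
Qed.

Lemma C1_frechet p0 z0 : frechet_at G p0 z0 (fun k => dx k G p0 z0) (dt G p0 z0).
Proof.
move=> eps eps0.
have all_open : open_st (fun (_ : Vec d) (_ : R) => True).
  by move=> x t _; exists 1; split=> //; lra.
have cont_dd o := cont_at (x := p0) (t := z0) all_open (C_on_cont (C_on_dd o G_C1)) I.
have [dT [dT0 dTnear]] := cont_dd None eps eps0.
have [dX [dX0 dXnear]] : exists del, 0 < del /\ forall k y s,
    near del p0 z0 y s -> Rabs (dx k G y s - dx k G p0 z0) < eps.
  apply: (exists_common_radius (P := fun k del => forall y s, near del p0 z0 y s -> _)).
    by move=> k del del' P_del [_ le] y s /(near_le le); exact: P_del.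
  by move=> k; exact: cont_dd (Some k) eps eps0.
have m1 := Rmin_l dT dX; have m2 := Rmin_r dT dX.
exists (Rmin dT dX); split; first exact: Rmin_glb_lt.
move=> q w [qp wz].
have time_step : Rabs (G q w - G q z0 - dt G p0 z0 * (w - z0)) <= eps * Rabs (w - z0).
  apply: mvt_bound (C1_dt_lim q) _ => c cz; apply: Rlt_le; apply: dTnear.
  by split=> [i|]; [have := qp i | ]; lra.
have coord_step (k : 'I_d) : Rabs (G (splice q p0 k.+1) z0 - G (splice q p0 k) z0
    - dx k G p0 z0 * (q k - p0 k)) <= eps * Rabs (q k - p0 k).
  rewrite splice_succ -{2}splice_upd.
  apply: mvt_bound (C1_dx_lim _ z0 k) _ => c ck; apply: Rlt_le; apply: dXnear.
  split=> [j|]; last by rewrite Rminus_diag Rabs_R0; lra.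
  rewrite /upd /splice; case: eqP => [->|_]; first by have := qp k; lra.
  by case: ifP => _; [have := qp j | rewrite Rminus_diag Rabs_R0]; lra.
have telescope : G q z0 - G p0 z0
    = sumI (fun k : 'I_d => G (splice q p0 k.+1) z0 - G (splice q p0 k) z0).
  rewrite (sumI_telescope d (fun n => G (splice q p0 n) z0)).
  congr (G _ _ - G _ _); apply: functional_extensionality => j; by rewrite /splice ?ltn_ord.
have -> : G q w - G p0 z0 - (sumI (fun k => dx k G p0 z0 * (q k - p0 k)) + dt G p0 z0 * (w - z0))
  = (G q w - G q z0 - dt G p0 z0 * (w - z0)) + sumI (fun k : 'I_d =>
      G (splice q p0 k.+1) z0 - G (splice q p0 k) z0 - dx k G p0 z0 * (q k - p0 k)).
  by rewrite sumIB -telescope; ring.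
apply: Rle_trans (Rabs_triang _ _) _.
have := Rle_trans _ _ _ (abs_sumI_le _) (ler_sumI coord_step).
by rewrite -sumI_distrr; lra.
Qed.

End ContinuouslyDifferentiable.

End Differentiability.

(* Values of the unknowns and of their derivatives at a single point: [vx i j] is
   [d_j v_i], [phtx k] is [d_k d_t phi], [phxx k j] is [d_j d_k phi], [X j i] is
   [d_i xi_j], [M i j] is [d_j (2 eta(phi) (Dv)_ij)] and [W i] is [d_i (m(phi) d_i mu)]. *)
Section PointwiseBalance.
Variables (d : nat) (v vt : 'I_d -> R) (vx : 'I_d -> 'I_d -> R).
Variables (pht : R) (phx phtx : 'I_d -> R) (phxx : 'I_d -> 'I_d -> R).
Variables (xi : 'I_d -> R) (X : 'I_d -> 'I_d -> R) (p : R) (px : 'I_d -> R).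
Variables (mu : R) (mux W : 'I_d -> R) (M : 'I_d -> 'I_d -> R).
Variables (rho rho' eta mm rc' fz : R).

Definition vsq := sumI (fun i => v i ^ 2).
Definition symD i j := (vx i j + vx j i) / 2.
Definition phidot_at := pht + sumI (fun k => v k * phx k).
Definition divv := sumI (fun j => vx j j).
Definition v_accel := sumI (fun i => v i * (vt i + sumI (fun j => v j * vx i j))).
Definition xi_rate := sumI (fun k => xi k * (phtx k + sumI (fun j => v j * phxx k j))).
Definition capillary := sumI (fun i => sumI (fun j => phx i * xi j * vx j i)).
Definition force_power := sumI (fun j => v j *
  (sumI (fun i => M j i) - px j - sumI (fun i => X j i * phx i + xi j * phxx i i))).

(* The derivative of the energy density in a direction along which phi, v and
   grad phi change at rates [dphi], [dv] and [dgphi]. *)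
Definition energy_rate dphi (dv dgphi : 'I_d -> R) :=
  rho' * dphi * vsq / 2 + rho * sumI (fun i => v i * dv i)
  + (sumI (fun k => xi k * dgphi k) + fz * dphi).

Lemma energy_transport :
  energy_rate pht vt phtx
  + sumI (fun j => v j * energy_rate (phx j) (fun i => vx i j) (fun k => phxx k j))
  = rho' * phidot_at * vsq / 2 + rho * v_accel + xi_rate + fz * phidot_at.
Proof.
have -> : sumI (fun j => v j * energy_rate (phx j) (fun i => vx i j) (fun k => phxx k j))
  = rho' * vsq / 2 * sumI (fun j => v j * phx j)
    + rho * sumI (fun j => v j * sumI (fun i => v i * vx i j))
    + sumI (fun j => v j * sumI (fun k => xi k * phxx k j)) + fz * sumI (fun j => v j * phx j).
  rewrite (sumI_distrr (rho' * vsq / 2)) (sumI_distrr rho) (sumI_distrr fz) -!sumID.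
  by apply: eq_sumI => j; rewrite /energy_rate /Rdiv; ring.
rewrite (exchange_sumI_weighted v v) (exchange_sumI_weighted v xi).
rewrite /energy_rate /phidot_at /v_accel /xi_rate.
rewrite (eq_sumI (F := fun i => v i * (vt i + _))
  (G := fun i => v i * vt i + v i * sumI (fun j => v j * vx i j))); last by move=> i; ring.
rewrite (eq_sumI (F := fun k => xi k * (phtx k + _))
  (G := fun k => xi k * phtx k + xi k * sumI (fun j => v j * phxx k j))); last by move=> k; ring.
by rewrite !sumID /Rdiv; ring.
Qed.

Hypothesis momentum : forall i,
  rho' * pht * v i + rho * vt i
  + sumI (fun j => (rho' * phx j * v i + rho * vx i j) * v j + rho * v i * vx j j)
  - sumI (fun j => M i j) + px i
  = - sumI (fun j => X i j * phx j + xi i * phxx j j).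

Lemma momentum_power : force_power = rho' * phidot_at * vsq + rho * v_accel + rho * vsq * divv.
Proof.
pose Q := sumI (fun i => v i * phx i).
have force_j j : sumI (fun i => M j i) - px j - sumI (fun i => X j i * phx i + xi j * phxx i i)
    = rho' * pht * v j + rho * vt j + rho' * Q * v j
      + rho * sumI (fun i => v i * vx j i) + rho * divv * v j.
  have split_j : sumI (fun i => (rho' * phx i * v j + rho * vx j i) * v i + rho * v j * vx i i)
      = rho' * Q * v j + rho * sumI (fun i => v i * vx j i) + rho * divv * v j.
    rewrite (eq_sumI (G := fun i => rho' * v j * (v i * phx i) + rho * (v i * vx j i)
      + rho * v j * vx i i)); last by move=> i; ring.
    by rewrite !sumID -!sumI_distrr /Q /divv; ring.
  by have := momentum j; rewrite split_j; lra.
rewrite /force_power (eq_sumI (G := fun j => rho' * pht * v j ^ 2 + rho * (v j * vt j)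
    + rho' * Q * v j ^ 2 + rho * (v j * sumI (fun i => v i * vx j i)) + rho * divv * v j ^ 2));
  last by move=> j; rewrite force_j; ring.
rewrite !sumID -!sumI_distrr /v_accel /phidot_at /vsq.
rewrite (eq_sumI (F := fun i => v i * (vt i + _))
  (G := fun i => v i * vt i + v i * sumI (fun j => v j * vx i j))); last by move=> i; ring.
by rewrite sumID /Q; ring.
Qed.

Lemma force_power_double : force_power = sumI (fun i => sumI (fun j =>
  (M j i - (phxx i i * xi j + phx i * X j i) - (if i == j then px i else 0)) * v j)).
Proof.
rewrite exchange_sumI /force_power; apply: eq_sumI => j.
rewrite -sumI_distrl !sumIB Rmult_comm; congr (_ * _).
have -> : sumI (fun i => if i == j then px i else 0) = px j.
  by rewrite -(sumI_kron px j); apply: eq_sumI => i; rewrite eq_sym.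
have -> : sumI (fun i => phxx i i * xi j + phx i * X j i)
    = sumI (fun i => X j i * phx i + xi j * phxx i i) by apply: eq_sumI => i; ring.
by rewrite -[sumI (M j)]/(sumI (fun i => M j i)); ring.
Qed.

Lemma stress_power :
  sumI (fun i => sumI (fun j =>
    (M j i - (phxx i i * xi j + phx i * X j i) - (if i == j then px i else 0)) * v j
    + (2 * eta * symD i j - phx i * xi j - (if i == j then p else 0)) * vx j i))
  = force_power + 2 * eta * sumI (fun i => sumI (fun j => symD i j ^ 2)) - capillary - p * divv.
Proof.
have p_divv : p * divv = sumI (fun i => sumI (fun j => (if i == j then p else 0) * vx j i)).
  by rewrite /divv sumI_distrr; apply: eq_sumI => i; rewrite (sumI_kron_mul (fun _ => p)).
rewrite force_power_double p_divv /symD -sumI_symmetric_part_sq /capillary sumI_distrr.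
rewrite -!sumID -!sumIB; apply: eq_sumI => i.
rewrite sumI_distrr -!sumID -!sumIB; apply: eq_sumI => j.
by field.
Qed.

Hypothesis phxx_sym : forall k j, phxx k j = phxx j k.
Hypothesis xi_phx_sym : forall i j, xi i * phx j = xi j * phx i.

Lemma phidot_xi_div :
  sumI (fun i => (phtx i + sumI (fun k => vx k i * phx k + v k * phxx k i)) * xi i
                 + phidot_at * X i i)
  = xi_rate + capillary + phidot_at * sumI (fun i => X i i).
Proof.
rewrite (eq_sumI (G := fun i => xi i * phtx i + sumI (fun k => phx i * xi k * vx k i)
    + xi i * sumI (fun k => v k * phxx i k) + phidot_at * X i i)); last first.
  move=> i; rewrite Rmult_plus_distr_r sumI_distrl.
  rewrite (eq_sumI (G := fun k => phx i * xi k * vx k i + xi i * (v k * phxx i k))); last first.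
    by move=> k; rewrite phxx_sym [phx i * xi k]Rmult_comm -(xi_phx_sym i k); ring.
  by rewrite sumID (sumI_distrr (xi i)); ring.
rewrite /xi_rate (eq_sumI (F := fun k => xi k * (phtx k + _))
  (G := fun k => xi k * phtx k + xi k * sumI (fun j => v j * phxx k j))); last by move=> k; ring.
by rewrite !sumID sumI_distrr /capillary; ring.
Qed.

Hypothesis div_free : divv = 0.
Hypothesis phase : rc' * pht + sumI (fun i => v i * (rc' * phx i)) = sumI W.
Hypothesis chem_pot : rc' * mu = fz - sumI (fun i => X i i) - rho' * vsq / 2.

Lemma pointwise_balance :
  energy_rate pht vt phtx
  + sumI (fun j => v j * energy_rate (phx j) (fun i => vx i j) (fun k => phxx k j))
  - sumI (fun i => sumI (fun j =>
      (M j i - (phxx i i * xi j + phx i * X j i) - (if i == j then px i else 0)) * v j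
      + (2 * eta * symD i j - phx i * xi j - (if i == j then p else 0)) * vx j i))
  - sumI (fun i => (phtx i + sumI (fun k => vx k i * phx k + v k * phxx k i)) * xi i
                   + phidot_at * X i i)
  + sumI (fun i => mux i * - (mm * mux i) + mu * - W i)
  = - (2 * eta * sumI (fun i => sumI (fun j => symD i j ^ 2)) + mm * sumI (fun i => mux i ^ 2)).
Proof.
have W_sum : sumI W = rc' * phidot_at.
  rewrite -phase /phidot_at Rmult_plus_distr_l (sumI_distrr rc'); congr (_ + _).
  by apply: eq_sumI => i; ring.
have flux : sumI (fun i => mux i * - (mm * mux i) + mu * - W i)
    = - (mm * sumI (fun i => mux i ^ 2) + mu * sumI W).
  rewrite (sumI_distrr mm) (sumI_distrr mu) -sumID -sumIN.
  by apply: eq_sumI => i; ring.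
rewrite energy_transport stress_power phidot_xi_div momentum_power flux W_sum div_free.
have -> : fz = rc' * mu + sumI (fun i => X i i) + rho' * vsq / 2 by lra.
by field.
Qed.

End PointwiseBalance.

Lemma has_dd_chain d (G : Fld d) o (c : 'I_d -> Fld d) (z : Fld d) x t (lc : 'I_d -> R) lz :
  C_on (fun _ _ => True) 1 G -> (forall k, has_dd o (c k) x t (lc k)) -> has_dd o z x t lz ->
  has_dd o (fun y s => G (fun k => c k y s) (z y s)) x t
    (sumI (fun k => dx k G (fun k => c k x t) (z x t) * lc k)
     + dt G (fun k => c k x t) (z x t) * lz).
Proof.
move=> G_C1 cl zl.
have := frechet_chain (c := fun k s => c k (movex x o s) (movet t o s)) (C1_frechet G_C1 _ _) cl zl.
by rewrite movex_coord movet_coord.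
Qed.

Lemma smoothR_derivable g : smoothR g -> forall z, exists l, derivable_pt_lim g z l.
Proof. by move=> g_smooth; case: (g_smooth 1%nat) => _ []. Qed.

Definition fswap d (f : R -> Vec d -> R) : Fld d := fun q z => f z q.

Lemma symgrad_sym d (v : 'I_d -> Fld d) i j : symgrad v i j = symgrad v j i.
Proof.
apply: functional_extensionality => y; apply: functional_extensionality => s.
by rewrite /symgrad Rplus_comm.
Qed.

Section LocalBalance.
Variables (d : nat) (U : Vec d -> R -> Prop) (rhoh rhoc eta m : R -> R).
Variables (f a : R -> Vec d -> R) (v : 'I_d -> Fld d) (p phi mu : Fld d) (x : Vec d) (t : R).
Hypothesis U_open : open_st U.
Hypotheses (rhoh_smooth : smoothR rhoh) (eta_smooth : smoothR eta) (m_smooth : smoothR m).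
Hypothesis f_smooth : smoothf f.
Hypotheses (v_C2 : forall i, C_on U 2 (v i)) (phi_C2 : C_on U 2 phi).
Hypotheses (p_C1 : C_on U 1 p) (mu_C2 : C_on U 2 mu).
Hypothesis Uxt : U x t.

Lemma fswap_smooth k : C_on (fun _ _ => True) k (fswap f).
Proof. exact: f_smooth. Qed.

Lemma phi_has_dd o : has_dd o phi x t (dd o phi x t).
Proof. exact: C_on_has_dd phi_C2 Uxt. Qed.

Lemma dphi_has_dd o k : has_dd o (dx k phi) x t (dd o (dx k phi) x t).
Proof. exact: C_on_has_dd (C_on_dd (Some k) phi_C2) Uxt. Qed.

Lemma v_has_dd o i : has_dd o (v i) x t (dd o (v i) x t).
Proof. exact: C_on_has_dd (v_C2 i) Uxt. Qed.

Lemma xi_has_dd o i : has_dd o (xi f phi i) x t (dd o (xi f phi i) x t).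
Proof.
have -> : xi f phi i = fun y s => dx i (fswap f) (fun k => dx k phi y s) (phi y s) by [].
apply: has_dd_deriv; eexists.
exact: (has_dd_chain (G := dx i (fswap f)) (c := fun k => dx k phi)
  (C_on_dd (Some i) (fswap_smooth 2)) (dphi_has_dd o) (phi_has_dd o)).
Qed.

Lemma energy_dd o : dd o (energy rhoh f v phi) x t
  = energy_rate (fun i => v i x t) (fun k => xi f phi k x t) (rhoh (phi x t))
      (deriv rhoh (phi x t)) (df_dz f (phi x t) (gradAt phi x t))
      (dd o phi x t) (fun i => dd o (v i) x t) (fun k => dd o (dx k phi) x t).
Proof.
rewrite (has_ddE (has_dd_add
  (has_dd_mulr (/ 2) (has_dd_mul (has_dd_comp (smoothR_derivable rhoh_smooth) (phi_has_dd o))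
                                (has_dd_sum (fun i => has_dd_sqr (v_has_dd o i)))))
  (has_dd_chain (G := fswap f) (c := fun k => dx k phi) (fswap_smooth 1)
                (dphi_has_dd o) (phi_has_dd o)))).
have -> : sumI (fun i => 2 * v i x t * dd o (v i) x t)
    = 2 * sumI (fun i => v i x t * dd o (v i) x t).
  by rewrite sumI_distrr; apply: eq_sumI => i; ring.
change (dt (fswap f) (fun k => dx k phi x t) (phi x t)) with (df_dz f (phi x t) (gradAt phi x t)).
have -> : sumI (fun k => dx k (fswap f) (gradAt phi x t) (phi x t) * dd o (dx k phi) x t)
  = sumI (fun k => xi f phi k x t * dd o (dx k phi) x t) by [].
by rewrite /energy_rate /vsq /sqnormV; field.
Qed.

Lemma eta_symgrad_has_dd o i j :
  has_dd o (fun y s => 2 * eta (phi y s) * symgrad v i j y s) x t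
    (dd o (fun y s => 2 * eta (phi y s) * symgrad v i j y s) x t).
Proof.
have dv o' k l : has_dd o' (dx l (v k)) x t (dd o' (dx l (v k)) x t).
  exact: C_on_has_dd (C_on_dd (Some l) (v_C2 k)) Uxt.
apply: has_dd_deriv; eexists.
exact: has_dd_mul (has_dd_mul (has_dd_const o 2 x t)
                              (has_dd_comp (smoothR_derivable eta_smooth) (phi_has_dd o)))
                  (has_dd_mulr (/ 2) (has_dd_add (dv o i j) (dv o j i))).
Qed.

Lemma stress_has_dd i j : has_dd (Some i) (stress eta f v p phi i j) x t
  (dx i (fun y s => 2 * eta (phi y s) * symgrad v j i y s) x t
   - (dx i (dx i phi) x t * xi f phi j x t + dx i phi x t * dx i (xi f phi j) x t)
   - (if i == j then dx i p x t else 0)).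
Proof.
rewrite (symgrad_sym v j i).
apply: has_dd_sub (has_dd_sub (eta_symgrad_has_dd _ i j)
                              (has_dd_mul (dphi_has_dd _ i) (xi_has_dd _ j))) _.
rewrite /idM; case: (i == j); [exact: C_on_has_dd p_C1 Uxt | exact: has_dd_const].
Qed.

Lemma div_stress_v : divV (matvec (stress eta f v p phi) v) x t
  = sumI (fun i => sumI (fun j =>
      (dx i (fun y s => 2 * eta (phi y s) * symgrad v j i y s) x t
       - (dx i (dx i phi) x t * xi f phi j x t + dx i phi x t * dx i (xi f phi j) x t)
       - (if i == j then dx i p x t else 0)) * v j x t
      + (2 * eta (phi x t) * symgrad v i j x t - dx i phi x t * xi f phi j x t
         - (if i == j then p x t else 0)) * dx i (v j) x t)).
Proof.
apply: eq_sumI => i.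
exact (has_ddE (has_dd_sum (fun j => has_dd_mul (stress_has_dd i j) (v_has_dd (Some i) j)))).
Qed.

Lemma div_phidot_xi : divV (fun i y s => phidot v phi y s * xi f phi i y s) x t
  = sumI (fun i => (dx i (dt phi) x t
        + sumI (fun k => dx i (v k) x t * dx k phi x t + v k x t * dx i (dx k phi) x t))
        * xi f phi i x t + phidot v phi x t * dx i (xi f phi i) x t).
Proof.
apply: eq_sumI => i.
have dphidot : has_dd (Some i) (phidot v phi) x t (dx i (dt phi) x t
    + sumI (fun k => dx i (v k) x t * dx k phi x t + v k x t * dx i (dx k phi) x t)).
  have -> : phidot v phi = fun y s => dt phi y s + sumI (fun k => v k y s * dx k phi y s) by [].
  have dphit : has_dd (Some i) (dt phi) x t (dx i (dt phi) x t).
    exact: C_on_has_dd (C_on_dd None phi_C2) Uxt.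
  exact: has_dd_add dphit (has_dd_sum (fun k => has_dd_mul (v_has_dd _ k) (dphi_has_dd _ k))).
exact (has_ddE (has_dd_mul dphidot (xi_has_dd _ i))).
Qed.

Lemma div_mu_flux : divV (fun i y s => mu y s * flux m phi mu i y s) x t
  = sumI (fun i => dx i mu x t * - (m (phi x t) * dx i mu x t)
                   + mu x t * - dx i (fun y s => m (phi y s) * dx i mu y s) x t).
Proof.
apply: eq_sumI => i.
have dflux : has_dd (Some i) (fun y s => m (phi y s) * dx i mu y s) x t
    (dx i (fun y s => m (phi y s) * dx i mu y s) x t).
  apply: has_dd_deriv; eexists.
  have ddmu : has_dd (Some i) (dx i mu) x t (dd (Some i) (dx i mu) x t).
    exact: C_on_has_dd (C_on_dd (Some i) mu_C2) Uxt.
  exact: has_dd_mul (has_dd_comp (smoothR_derivable m_smooth) (phi_has_dd _)) ddmu.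
have dmu : has_dd (Some i) mu x t (dx i mu x t) by exact: C_on_has_dd mu_C2 Uxt.
apply: (has_ddE (o := Some i)); exact: has_dd_mul dmu (has_dd_opp dflux).
Qed.

Lemma dphi_comm_t k : dt (dx k phi) x t = dx k (dt phi) x t.
Proof. exact: (dd_comm (o1 := None) (o2 := Some k) U_open phi_C2 Uxt). Qed.

Lemma dphi_comm k j : dx j (dx k phi) x t = dx k (dx j phi) x t.
Proof.
case: (eqVneq j k) => [-> //|jk].
have ne : Some j != Some k by apply: contra jk => /eqP [->].
exact: (dd_comm U_open phi_C2 Uxt ne).
Qed.

Hypothesis a_rel : forall y s, U y s -> a_relation f a phi y s.

Lemma div_a_grad_phi i j :
  dx j (fun y s => a_phi a phi y s * (dx i phi y s * dx j phi y s)) x t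
  = dx j (xi f phi i) x t * dx j phi x t + xi f phi i x t * dx j (dx j phi) x t.
Proof.
rewrite (_ : dx j (fun y s => a_phi a phi y s * (dx i phi y s * dx j phi y s)) x t
             = dx j (fun y s => xi f phi i y s * dx j phi y s) x t).
  exact (has_ddE (has_dd_mul (xi_has_dd (Some j) i) (dphi_has_dd (Some j) j))).
by apply: (dd_local (Some j) U_open Uxt) => y s Uys; rewrite (a_rel Uys i) Rmult_assoc.
Qed.

Lemma momentum_at : momentum_eq rhoh eta a v p phi x t -> forall i,
  deriv rhoh (phi x t) * dt phi x t * v i x t + rhoh (phi x t) * dt (v i) x t
  + sumI (fun j => (deriv rhoh (phi x t) * dx j phi x t * v i x t
                    + rhoh (phi x t) * dx j (v i) x t) * v j x t
                   + rhoh (phi x t) * v i x t * dx j (v j) x t)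
  - sumI (fun j => dx j (fun y s => 2 * eta (phi y s) * symgrad v i j y s) x t) + dx i p x t
  = - sumI (fun j => dx j (xi f phi i) x t * dx j phi x t + xi f phi i x t * dx j (dx j phi) x t).
Proof.
move=> mom i; have := mom i.
have rho_dd o := has_dd_comp (smoothR_derivable rhoh_smooth) (phi_has_dd o).
have -> : dt (fun y s => rhoh (phi y s) * v i y s) x t
    = deriv rhoh (phi x t) * dt phi x t * v i x t + rhoh (phi x t) * dt (v i) x t.
  exact (has_ddE (has_dd_mul (rho_dd None) (v_has_dd None i))).
have -> : divM (fun k j y s => rhoh (phi y s) * v k y s * v j y s) i x t
    = sumI (fun j => (deriv rhoh (phi x t) * dx j phi x t * v i x t
                      + rhoh (phi x t) * dx j (v i) x t) * v j x t
                     + rhoh (phi x t) * v i x t * dx j (v j) x t).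
  apply: eq_sumI => j.
  exact (has_ddE (has_dd_mul (has_dd_mul (rho_dd (Some j)) (v_has_dd (Some j) i))
                             (v_has_dd (Some j) j))).
by rewrite /divM (eq_sumI (div_a_grad_phi i)).
Qed.

Hypothesis rhoc_smooth : smoothR rhoc.

Lemma phase_at : phase_eq rhoc m v phi mu x t ->
  deriv rhoc (phi x t) * dt phi x t
  + sumI (fun i => v i x t * (deriv rhoc (phi x t) * dx i phi x t))
  = sumI (fun i => dx i (fun y s => m (phi y s) * dx i mu y s) x t).
Proof.
have rhoc_dd o := has_dd_comp (smoothR_derivable rhoc_smooth) (phi_has_dd o).
rewrite /phase_eq /adv /divV => <-; congr (_ + _).
  exact (esym (has_ddE (rhoc_dd None))).
by apply: eq_sumI => i; congr (_ * _); exact (esym (has_ddE (rhoc_dd (Some i)))).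
Qed.

Lemma chem_pot_at : chem_pot_eq rhoh rhoc f a v phi mu x t ->
  deriv rhoc (phi x t) * mu x t
  = df_dz f (phi x t) (gradAt phi x t) - sumI (fun i => dx i (xi f phi i) x t)
    - deriv rhoh (phi x t) * sqnormV v x t / 2.
Proof.
rewrite /chem_pot_eq /divV => ->; congr (_ - _ - _); apply: eq_sumI => i.
by apply: (dd_local (Some i) U_open Uxt) => y s Uys; rewrite (a_rel Uys i).
Qed.

Lemma local_dissipation :
  momentum_eq rhoh eta a v p phi x t -> incompressible v x t ->
  phase_eq rhoc m v phi mu x t -> chem_pot_eq rhoh rhoc f a v phi mu x t ->
  dissip_lhs rhoh eta m f v p phi mu x t = - dissip_rate eta m v phi mu x t.
Proof.
move=> mom inc ph ch.
have xi_sym i j : xi f phi i x t * dx j phi x t = xi f phi j x t * dx i phi x t.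
  by rewrite !(a_rel Uxt); ring.
have energy_t := energy_dd None.
have energy_x j := energy_dd (Some j).
rewrite /= in energy_t energy_x.
rewrite /dissip_lhs energy_t /adv (eq_sumI (fun j => congr1 (Rmult (v j x t)) (energy_x j))).
rewrite div_stress_v div_phidot_xi div_mu_flux.
rewrite (_ : (fun k => dt (dx k phi) x t) = fun k => dx k (dt phi) x t); last first.
  by apply: functional_extensionality => k; exact: dphi_comm_t.
exact: (pointwise_balance (fun k => dx k (dt phi) x t) (p x t) (fun i => dx i mu x t)
  (eta (phi x t)) (m (phi x t))
  (momentum_at mom) dphi_comm xi_sym inc (phase_at ph) (chem_pot_at ch)).
Qed.

End LocalBalance.

Lemma dissip_rate_ge0 d (eta m : R -> R) (v : 'I_d -> Fld d) (phi mu : Fld d) x t :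
  (forall z, 0 <= eta z) -> (forall z, 0 <= m z) -> 0 <= dissip_rate eta m v phi mu x t.
Proof.
move=> eta0 m0; rewrite /dissip_rate.
have : 0 <= sqnormM (symgrad v) x t.
  by apply: sumI_ge0 => i; apply: sumI_ge0 => j; exact: pow2_ge_0.
have : 0 <= sqnormV (grad mu) x t by apply: sumI_ge0 => i; exact: pow2_ge_0.
by have := eta0 (phi x t); have := m0 (phi x t); nra.
Qed.

Theorem mainTheorem4 (d : nat) (Omega : Vec d -> Prop) (T : R)
  (rhoh rhoc eta m : R -> R) (f a : R -> Vec d -> R)
  (v : 'I_d -> Fld d) (p phi mu : Fld d) :
  is_open Omega ->
  smoothR rhoh -> smoothR rhoc -> smoothR eta -> smoothR m -> smoothf f ->
  (forall z, 0 <= eta z) -> (forall z, 0 <= m z) ->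
  let U := fun x t => Omega x /\ 0 < t < T in
  (forall i, C_on U 2 (v i)) -> C_on U 2 p -> C_on U 2 phi -> C_on U 2 mu ->
  (forall x t, U x t ->
     momentum_eq rhoh eta a v p phi x t /\ incompressible v x t /\
     phase_eq rhoc m v phi mu x t /\ chem_pot_eq rhoh rhoc f a v phi mu x t /\
     a_relation f a phi x t) ->
  forall x t, U x t ->
    dissip_lhs rhoh eta m f v p phi mu x t = - dissip_rate eta m v phi mu x t /\
    - dissip_rate eta m v phi mu x t <= 0.
Proof.
move=> Omega_open rhoh_s rhoc_s eta_s m_s f_s eta0 m0 U v_C2 p_C2 phi_C2 mu_C2 eqs x t Uxt.
have a_rel y s : U y s -> a_relation f a phi y s by move=> /eqs [_ [_ [_ [_]]]].
have [mom [inc [ph [ch _]]]] := eqs x t Uxt.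
split.
  exact (local_dissipation (open_st_cylinder (T := T) Omega_open) rhoh_s eta_s m_s f_s v_C2 phi_C2
    (C_on_succ p_C2) mu_C2 Uxt a_rel rhoc_s mom inc ph ch).
by have := dissip_rate_ge0 v phi mu x t eta0 m0; lra.
Qed.
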